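(* Let $n$ be a positive integer and let $\Omega_1,\Omega_2$ be two distinct copies of $2^{[n]}$. For $i=1,2$ let $\bm{p}_i=(p_i^{(1)},\dots,p_i^{(n)})$ be a probability vector (i.e. $0<p_i^{(\ell)}<1$ for all $\ell$), write $p_i:=p_i^{(1)}$, and let $\mu_i$ be the product measure on $\Omega_i$ given by $$\mu_i(U)=\sum_{x\in U}\prod_{\ell\in x}p_i^{(\ell)}\prod_{k\in[n]\setminus x}(1-p_i^{(k)})\qquad (U\subset\Omega_i).$$ Assume that $p_1p_2=\max\{p_1^{(\ell)}p_2^{(\ell)}:\ell\in[n]\}$ and that $p_1^{(\ell)},p_2^{(\ell)}\leqslant 1/3$ for all $\ell\in[n]$. If $U_1\subset\Omega_1$ and $U_2\subset\Omega_2$ are cross-intersecting (i.e. $x\cap y\neq\emptyset$ for all $x\in U_1$, $y\in U_2$), then $\mu_1(U_1)\mu_2(U_2)\leqslant p_1p_2$. Moreover, with $w:=\{\ell\in[n]:p_1^{(\ell)}p_2^{(\ell)}=p_1p_2\}$ and $U_i^{(\ell)}:=\{x\in\Omega_i:\ell\in x\}$, equality holds if and only if $U_1=U_1^{(\ell)}$ and $U_2=U_2^{(\ell)}$ for some $\ell\in w$.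
   Context: A probability vector is a vector $\bm{p}=(p^{(1)},\dots,p^{(n)})$ with $0<p^{(\ell)}<1$ for every $\ell$. *)

From mathcomp Require Import all_boot all_order all_algebra.
Set Implicit Arguments. Unset Strict Implicit. Unset Printing Implicit Defensive.
Import Order.TTheory GRing.Theory Num.Theory.
Local Open Scope ring_scope.

Definition prob_vector (R : realFieldType) (n : nat) (p : 'I_n -> R) : Prop :=
  forall l, 0 < p l /\ p l < 1.

Definition prod_measure (R : realFieldType) (n : nat) (p : 'I_n -> R)
    (U : {set {set 'I_n}}) : R :=
  \sum_(x in U) ((\prod_(l in x) p l) * \prod_(k in ~: x) (1 - p k)).

Definition cross_intersecting (n : nat) (U1 U2 : {set {set 'I_n}}) : Prop :=
  forall x y, x \in U1 -> y \in U2 -> x :&: y != set0.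

Definition star (n : nat) (l : 'I_n) : {set {set 'I_n}} := [set x : {set 'I_n} | l \in x].

(* Induction on the number of coordinates.  Splitting both families at a coordinate l gives
     mu_i(U_i) = (1 - p_i^(l)) mu_i'(U_i^0) + p_i^(l) mu_i'(U_i^1),
   where U^0 = {x in U | l \notin x} and U^1 = {x - l | x in U, l \in x}, and the pairs
   (U_1^0, U_2^0), (U_1^0, U_2^1), (U_1^1, U_2^0) are again cross-intersecting.  It therefore
   suffices to find a planar region containing (0,0), (0,1), (1,0) that is stable under this
   three-point mixing whenever a, b <= 1/3 and ab <= M = p_1 p_2.  The region
     xy <= M  and  3M(x + y) + (2 - 9M)xy <= 3M
   works: the second, hyperbolic, constraint is what lets the first survive the mixing step.
   Following when xy = M can be attained through the induction gives the equality case. *)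

From mathcomp Require Import all_boot all_order all_algebra.
From mathcomp Require Import ring lra.
Set Implicit Arguments. Unset Strict Implicit. Unset Printing Implicit Defensive.
Import Order.TTheory GRing.Theory Num.Theory.
Local Open Scope ring_scope.

Section PlanarStep.
Variable R : realFieldType.

Definition curve (M x y : R) : R := 3 * M * (x + y) + (2 - 9 * M) * x * y.

Definition region (M x y : R) : Prop := x * y <= M /\ curve M x y <= 3 * M.

Definition below_or_origin (X Y x1 y1 : R) : Prop :=
  (x1 <= X /\ y1 <= Y) \/ (X = 0 /\ Y = 0).

Lemma mix_mul_subr (a b P K : R) :
  ((1 - a) * P + a * K) * ((1 - b) * P + b * K) - K * P
  = ((1 - a) * (1 - b) * P - a * b * K) * (P - K).
Proof. ring. Qed.

Lemma mix_mul_le (a b P K : R) : P <= K -> a * b * K <= (1 - a) * (1 - b) * P ->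
  ((1 - a) * P + a * K) * ((1 - b) * P + b * K) <= K * P.
Proof.
move=> PK abK; rewrite -subr_le0 mix_mul_subr.
by apply: mulr_ge0_le0; rewrite ?subr_ge0 ?subr_le0.
Qed.

Lemma mix_mul_eq (a b P K : R) :
  ((1 - a) * P + a * K) * ((1 - b) * P + b * K) = K * P ->
  P = K \/ (1 - a) * (1 - b) * P = a * b * K.
Proof.
move/eqP; rewrite -subr_eq0 mix_mul_subr mulf_eq0 !subr_eq0 => /orP[] /eqP; by [right | left].
Qed.

Lemma hyperbola_mix (m K a b s t s1 t1 : R) :
  0 < m -> 0 <= a < 1 -> 0 <= b < 1 -> a * b * K <= (1 - a) * (1 - b) * m ^+ 2 ->
  m <= s -> m <= t -> 0 <= s1 -> 0 <= t1 ->
  s * t <= K -> s1 * t <= K -> s * t1 <= K ->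
  ((1 - a) * s + a * s1) * ((1 - b) * t + b * t1) <= K /\
  (((1 - a) * s + a * s1) * ((1 - b) * t + b * t1) = K ->
   (s1 <= s /\ t1 <= t) \/ [/\ s = m, t = m & a * b * K = (1 - a) * (1 - b) * m ^+ 2]).
Proof.
move=> m0 /andP[a0 a1] /andP[b0 b1] abK ms mt s10 t10 stK s1tK st1K.
set u := _ * s + _; set v := _ * t + _.
have s0 : 0 < s := lt_le_trans m0 ms.
have t0 : 0 < t := lt_le_trans m0 mt.
have st0 : 0 < s * t by apply: mulr_gt0.
have ab0 : 0 < (1 - a) * (1 - b) by apply: mulr_gt0; rewrite subr_gt0.
have m2st : m ^+ 2 <= s * t by rewrite expr2 ler_pM // ltW.
have abK' : a * b * K <= (1 - a) * (1 - b) * (s * t).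
  by apply: (le_trans abK); rewrite ler_pM2l.
have ut : u * t <= (1 - a) * (s * t) + a * K.
  by rewrite /u mulrDl -mulrA lerD2l -mulrA ler_wpM2l.
have vs : v * s <= (1 - b) * (s * t) + b * K.
  by rewrite /v mulrDl -mulrA [t * s]mulrC lerD2l -mulrA [t1 * s]mulrC ler_wpM2l.
have u0 : 0 <= u by rewrite /u addr_ge0 // mulr_ge0 // ?subr_ge0 // ltW.
have v0 : 0 <= v by rewrite /v addr_ge0 // mulr_ge0 // ?subr_ge0 // ltW.
have uvst : u * v * (s * t) = (u * t) * (v * s) by ring.
have mixK := mix_mul_le stK abK'.
have uv_st : u * v * (s * t) <= K * (s * t).
  by rewrite uvst (le_trans _ mixK) // ler_pM // mulr_ge0 // ltW.
split; first by rewrite -(ler_pM2r st0).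
move=> uvK.
have /mix_mul_eq [stK'|] : ((1 - a) * (s * t) + a * K) * ((1 - b) * (s * t) + b * K) = K * (s * t).
  apply/eqP; rewrite eq_le mixK /= -[X in X * (s * t)]uvK uvst.
  by apply: ler_pM => //; rewrite mulr_ge0 // ltW.
- left; split.
    by rewrite -(ler_pM2r t0) stK'.
  by rewrite -(ler_pM2l s0) stK'.
- move=> abKst; right.
  have stm : s * t = m ^+ 2.
    by apply/eqP; rewrite eq_le m2st andbT -(ler_pM2l ab0) abKst.
  have sm : s = m by apply/eqP; rewrite eq_le ms andbT; nra.
  have tm : t = m by apply/eqP; rewrite eq_le mt andbT; nra.
  by split => //; rewrite -abKst stm.
Qed.

Lemma curve_hyperbolaE (M x y : R) :
  (3 * M + (2 - 9 * M) * x) * (3 * M + (2 - 9 * M) * y)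
  = (3 * M) ^+ 2 + (2 - 9 * M) * curve M x y.
Proof. rewrite /curve; ring. Qed.

Lemma curve_le_hyperbola (M x y : R) : 9 * M <= 1 ->
  (curve M x y <= 3 * M) =
  ((3 * M + (2 - 9 * M) * x) * (3 * M + (2 - 9 * M) * y) <= 3 * M * (3 * M + (2 - 9 * M))).
Proof.
move=> M9; have c0 : 0 < 2 - 9 * M by lra.
have -> : 3 * M * (3 * M + (2 - 9 * M)) = (3 * M) ^+ 2 + (2 - 9 * M) * (3 * M) by ring.
by rewrite curve_hyperbolaE lerD2l ler_pM2l.
Qed.

Lemma mix_weights_le (M a b : R) : 0 < M -> 9 * M <= 1 ->
  0 <= a -> 3 * a <= 1 -> 0 <= b -> 3 * b <= 1 -> a * b <= M ->
  a * b * (3 * M * (3 * M + (2 - 9 * M))) <= (1 - a) * (1 - b) * (3 * M) ^+ 2.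
Proof. move=> *; have : 0 <= (1 - 3 * a) * (1 - 3 * b) by nra. nra. Qed.

Lemma curve_mix (M a b X Y x1 y1 : R) : 0 < M -> 9 * M <= 1 ->
  0 <= a -> 3 * a <= 1 -> 0 <= b -> 3 * b <= 1 -> a * b <= M ->
  0 <= X -> 0 <= Y -> 0 <= x1 -> 0 <= y1 ->
  curve M X Y <= 3 * M -> curve M X y1 <= 3 * M -> curve M x1 Y <= 3 * M ->
  curve M ((1 - a) * X + a * x1) ((1 - b) * Y + b * y1) <= 3 * M /\
  (curve M ((1 - a) * X + a * x1) ((1 - b) * Y + b * y1) = 3 * M ->
   below_or_origin X Y x1 y1).
Proof.
move=> M0 M9 a0 a3 b0 b3 abM X0 Y0 x10 y10.
rewrite !curve_le_hyperbola //; set c := 2 - 9 * M => XY X1 Y1.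
have c1 : 1 <= c by rewrite /c; lra.
have lin_ge (x : R) : 0 <= x -> 3 * M <= 3 * M + c * x.
  by move=> x0; rewrite lerDl mulr_ge0 // (le_trans ler01).
have mixE (d x0 x1' : R) : 3 * M + c * ((1 - d) * x0 + d * x1')
    = (1 - d) * (3 * M + c * x0) + d * (3 * M + c * x1') by ring.
have a1 : 0 <= a < 1 by rewrite a0; lra.
have b1 : 0 <= b < 1 by rewrite b0; lra.
have [mixle mixeq] := hyperbola_mix (ltac:(lra) : 0 < 3 * M) a1 b1
  (mix_weights_le M0 M9 a0 a3 b0 b3 abM) (lin_ge _ X0) (lin_ge _ Y0)
  (le_trans (ltW (ltac:(lra) : 0 < 3 * M)) (lin_ge _ x10))
  (le_trans (ltW (ltac:(lra) : 0 < 3 * M)) (lin_ge _ y10)) XY Y1 X1.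
have c0 : 0 < c by lra.
split; first by rewrite !mixE.
move=> eq3M.
have : (3 * M + c * ((1 - a) * X + a * x1)) * (3 * M + c * ((1 - b) * Y + b * y1))
       = 3 * M * (3 * M + c).
  by rewrite curve_hyperbolaE -/c eq3M; ring.
rewrite !mixE => /mixeq [[sx ty]|[sX tY _]]; [left|right].
  by split; rewrite -(ler_pM2l c0) -(lerD2l (3 * M)).
by split; apply/eqP; rewrite -(mulrI_eq0 _ (lregP (lt0r_neq0 c0))); apply/eqP; lra.
Qed.

Lemma mix_weights_lt (M a b : R) : 0 < M ->
  0 <= a -> 3 * a <= 1 -> 0 <= b -> 3 * b <= 1 -> a * b <= M ->
  a * b * M < (1 - a) * (1 - b) * (3 * M) ^+ 2.
Proof.
move=> M0 a0 a3 b0 b3 abM.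
have ab49 : 4 / 9 <= (1 - a) * (1 - b) by nra.
have : a * b * M <= M ^+ 2 by rewrite expr2 ler_wpM2r // ltW.
have : 0 < M ^+ 2 by rewrite exprn_gt0.
have : 4 / 9 * (3 * M) ^+ 2 <= (1 - a) * (1 - b) * (3 * M) ^+ 2.
  by rewrite ler_wpM2r // sqr_ge0.
rewrite exprMn; lra.
Qed.

Lemma product_mix_outer (M a b X Y x1 y1 : R) : 0 < M ->
  0 <= a -> 3 * a <= 1 -> 0 <= b -> 3 * b <= 1 -> a * b <= M ->
  3 * M <= X -> 3 * M <= Y -> 0 <= x1 -> 0 <= y1 ->
  X * Y <= M -> X * y1 <= M -> x1 * Y <= M ->
  ((1 - a) * X + a * x1) * ((1 - b) * Y + b * y1) <= M /\
  (((1 - a) * X + a * x1) * ((1 - b) * Y + b * y1) = M -> below_or_origin X Y x1 y1).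
Proof.
move=> M0 a0 a3 b0 b3 abM MX MY x10 y10 XY Xy1 x1Y.
have a1 : 0 <= a < 1 by rewrite a0; lra.
have b1 : 0 <= b < 1 by rewrite b0; lra.
have ablt := mix_weights_lt M0 a0 a3 b0 b3 abM.
have [mixle mixeq] := hyperbola_mix (ltac:(lra) : 0 < 3 * M) a1 b1 (ltW ablt)
  MX MY x10 y10 XY x1Y Xy1.
split => // /mixeq [le|[_ _ abeq]]; first by left.
by move: ablt; rewrite abeq ltxx.
Qed.

Lemma middle_bound (M a b X Y : R) : 0 < M -> 9 * M <= 1 ->
  0 <= a -> 3 * a <= 1 -> 0 <= b -> 3 * b <= 1 -> a * b <= M ->
  0 <= X -> X <= 3 * M -> 3 * M <= Y -> 3 * Y <= 1 ->
  let s := 3 * M + (2 - 9 * M) * X in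
  let N := ((1 - a) * (X * Y) + a * M) * ((1 - b) * (Y * s) + 3 * M * b * (1 - X)) in
  N <= M * (Y * s) /\ (N = M * (Y * s) -> X * Y = M).
Proof.
move=> hM hM9 ha ha3 hb hb3 hab hX hX3 hY hY3 s N.
have hs : 3 * M <= s by rewrite /s; nra.
have hXY : X * Y <= M.
  have : X * Y <= 3 * M * Y by apply: ler_wpM2r; lra.
  have : M * (3 * Y) <= M * 1 by apply: ler_wpM2l; lra.
  lra.
have key : M * (Y * s) - N
   = (M - X * Y) * ((1 - a) * (1 - b) * (Y * s) - 3 * M * a * b * (1 - X))
     + b * Y * M * ((3 * X - 1) * (X - 3 * M)).
  by rewrite /N /s; ring.
have hf : 0 < (1 - a) * (1 - b) * (Y * s) - 3 * M * a * b * (1 - X).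
  have abX : a * b * (1 - X) <= M.
    have : a * b * (1 - X) <= a * b * 1 by apply: ler_wpM2l; [apply: mulr_ge0 | lra].
    lra.
  have : (3 * M) * (a * b * (1 - X)) <= (3 * M) * M by apply: ler_wpM2l; lra.
  have : 4 / 9 * (9 * M ^+ 2) <= (1 - a) * (1 - b) * (Y * s).
    have h4 : 4 / 9 <= (1 - a) * (1 - b) by nra.
    have hYs : 9 * M ^+ 2 <= Y * s.
      have M30 : 0 <= 3 * M by lra.
      by have := ler_pM M30 M30 hY hs; rewrite expr2; lra.
    by apply: ler_pM; [lra | nra | lra | lra].
  have : 0 < M ^+ 2 by apply: exprn_gt0.
  rewrite expr2; lra.
have hq : 0 <= b * Y * M * ((3 * X - 1) * (X - 3 * M)).
  by apply: mulr_ge0; [rewrite !mulr_ge0 //; lra | nra].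
have hT1 : 0 <= (M - X * Y) * ((1 - a) * (1 - b) * (Y * s) - 3 * M * a * b * (1 - X)).
  by apply: mulr_ge0; lra.
split; first lra.
move=> hN; have : (M - X * Y) * ((1 - a) * (1 - b) * (Y * s) - 3 * M * a * b * (1 - X)) = 0.
  lra.
by move/eqP; rewrite mulf_eq0 (gt_eqF hf) orbF subr_eq0 => /eqP.
Qed.

Lemma product_mix_middle (M a b X Y x1 y1 : R) : 0 < M -> 9 * M <= 1 ->
  0 <= a -> 3 * a <= 1 -> 0 <= b -> 3 * b <= 1 -> a * b <= M ->
  0 <= X -> X <= 3 * M -> 3 * M <= Y -> 3 * Y <= 1 -> 0 <= x1 -> 0 <= y1 ->
  curve M X y1 <= 3 * M -> x1 * Y <= M ->
  ((1 - a) * X + a * x1) * ((1 - b) * Y + b * y1) <= M /\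
  (((1 - a) * X + a * x1) * ((1 - b) * Y + b * y1) = M -> below_or_origin X Y x1 y1).
Proof.
move=> hM hM9 ha ha3 hb hb3 hab hX hX3 hY hY3 hx1 hy1.
have [Nle Neq] := middle_bound hM hM9 ha ha3 hb hb3 hab hX hX3 hY hY3.
move: Nle Neq; rewrite /curve /=.
set c := 2 - 9 * M; have hc : c = 2 - 9 * M by []; clearbody c.
set s := 3 * M + c * X => Nle Neq hA hB.
set z := _ * X + _; set w := _ * Y + _.
have hc1 : 1 <= c by lra.
have hs : 3 * M <= s by rewrite /s; nra.
have hYs : 0 < Y * s by nra.
have h1 : z * Y <= (1 - a) * (X * Y) + a * M.
  have -> : z * Y = (1 - a) * (X * Y) + a * (x1 * Y) by rewrite /z; ring.
  by rewrite lerD2l ler_wpM2l.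
have hy1s : y1 * s <= 3 * M * (1 - X) by rewrite /s; lra.
have h2 : w * s <= (1 - b) * (Y * s) + 3 * M * b * (1 - X).
  have -> : w * s = (1 - b) * (Y * s) + b * (y1 * s) by rewrite /w; ring.
  have : b * (y1 * s) <= b * (3 * M * (1 - X)) by apply: ler_wpM2l.
  lra.
have hprod : (z * w) * (Y * s)
              <= ((1 - a) * (X * Y) + a * M) * ((1 - b) * (Y * s) + 3 * M * b * (1 - X)).
  have -> : (z * w) * (Y * s) = (z * Y) * (w * s) by ring.
  by apply: ler_pM => //; apply: mulr_ge0; rewrite /z /w; nra.
split; first by rewrite -(ler_pM2r hYs); lra.
move=> hE; left.
have hXY : X * Y = M by apply: Neq; move: hprod; rewrite hE; lra.
have eY : Y = 1 / 3 by nra.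
have eX : X = 3 * M by nra.
split.
- by rewrite -(ler_pM2r (ltac:(lra) : 0 < Y)) hXY.
- rewrite -(ler_pM2r (ltac:(lra) : 0 < s)).
  by move: hy1s; rewrite /s eY eX hc; nra.
Qed.

Lemma curve_le_high (M x Y : R) : 0 < M -> 9 * M <= 1 -> 1 <= 3 * Y -> 0 <= x ->
  curve M x Y <= 3 * M -> x <= 3 * M.
Proof.
rewrite /curve => hM hM9 hY hx hB.
have hc1 : 1 <= 2 - 9 * M by lra.
have hp : 0 < 3 * M + (2 - 9 * M) * Y by nra.
rewrite -(ler_pM2r hp).
have : 0 <= (3 * Y - 1) * (1 - 3 * M) by apply: mulr_ge0; lra.
nra.
Qed.

Lemma product_mix_high (M a b X Y x1 y1 : R) : 0 < M -> 9 * M <= 1 ->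
  0 <= a -> 3 * a <= 1 -> 0 <= b -> 3 * b <= 1 -> a * b <= M ->
  0 <= X -> X <= 3 * M -> 1 <= 3 * Y -> 0 <= x1 -> 0 <= y1 ->
  curve M X Y <= 3 * M -> curve M X y1 <= 3 * M -> curve M x1 Y <= 3 * M ->
  ((1 - a) * X + a * x1) * ((1 - b) * Y + b * y1) <= M /\
  (((1 - a) * X + a * x1) * ((1 - b) * Y + b * y1) = M -> below_or_origin X Y x1 y1).
Proof.
move=> hM hM9 ha ha3 hb hb3 hab hX hX3 hY hx1 hy1 hXY hXy1 hB.
have hx13 := curve_le_high hM hM9 hY hx1 hB.
have [hL hLe] := curve_mix hM hM9 ha ha3 hb hb3 hab hX (ltac:(lra) : 0 <= Y) hx1 hy1 hXY hXy1 hB.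
move: hB hL hLe; rewrite /curve.
set c := 2 - 9 * M; have hc : c = 2 - 9 * M by []; clearbody c.
set z := _ * X + _; set w := _ * Y + _ => hB hL hLe.
have hc1 : 1 <= c by lra.
have hz : 0 <= z by rewrite /z; apply: addr_ge0; apply: mulr_ge0; lra.
have hw : 0 <= w by rewrite /w; apply: addr_ge0; apply: mulr_ge0; lra.
have hz3 : z <= 3 * M.
  rewrite /z. have : a * x1 <= a * (3 * M) by apply: ler_wpM2l.
  have : (1 - a) * X <= (1 - a) * (3 * M) by apply: ler_wpM2l; lra.
  lra.
have hpz : 0 < 3 * M + c * z by nra.
have hw1 : w * (3 * M + c * z) <= 3 * M * (1 - z) by lra.
have hq : 3 * M * z * (1 - z) <= M * (3 * M + c * z).
  have : 0 <= (1 - 3 * z) * (3 * M - z) by apply: mulr_ge0; lra.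
  rewrite hc; nra.
have hzw : (z * w) * (3 * M + c * z) <= 3 * M * z * (1 - z).
  have -> : (z * w) * (3 * M + c * z) = z * (w * (3 * M + c * z)) by ring.
  have : z * (w * (3 * M + c * z)) <= z * (3 * M * (1 - z)) by apply: ler_wpM2l.
  lra.
split.
  have : (z * w) * (3 * M + c * z) <= M * (3 * M + c * z) by lra.
  by rewrite ler_pM2r.
move=> hE; apply: hLe.
have hzp : 0 < z.
  rewrite lt_neqAle hz andbT; apply/eqP => hz0. move: hE; rewrite -hz0 mul0r; lra.
have e1 : z * (w * (3 * M + c * z)) = z * (3 * M * (1 - z)).
  have -> : z * (w * (3 * M + c * z)) = (z * w) * (3 * M + c * z) by ring.
  rewrite hE; apply/eqP; rewrite eq_le; apply/andP; split; first by move: hzw; rewrite hE; lra.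
  lra.
have e2 : w * (3 * M + c * z) = 3 * M * (1 - z) by apply: (mulfI (lt0r_neq0 hzp)).
lra.
Qed.

Lemma curveC (M x y : R) : curve M x y = curve M y x.
Proof. rewrite /curve; ring. Qed.

Lemma corner_convex (A B M a : R) : 0 < M -> 9 * M <= 1 -> 0 <= A -> 0 <= B ->
  3 * M <= a -> 3 * a <= 1 ->
  a * a * B + M * A <= a * (3 * M * B + A / 3) \/ a * a * B + M * A <= a * (B / 3 + 3 * M * A).
Proof.
move=> hM hM9 hA hB ha ha3.
case: (lerP (3 * a * B) A) => h; [left | right]; rewrite -subr_ge0.
  have -> : a * (3 * M * B + A / 3) - (a * a * B + M * A) = (a - 3 * M) * (A / 3 - a * B).
    by field.
  by apply: mulr_ge0; lra.
have -> : a * (B / 3 + 3 * M * A) - (a * a * B + M * A) = (1 / 3 - a) * (a * B - 3 * M * A).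
  by field.
apply: mulr_ge0; first lra.
have : 3 * M * A <= A / 3 by nra.
lra.
Qed.

Lemma corner_mix_le (M a b A B k : R) : 0 < M -> 9 * M <= 1 ->
  0 <= a -> 3 * a <= 1 -> 0 <= b -> 3 * b <= 1 -> a * b <= M ->
  0 <= A -> 0 <= B -> 0 <= k ->
  (A + a * k) * (B + b * k) <= (A + k / 3) * (B + 3 * M * k) \/
  (A + a * k) * (B + b * k) <= (A + 3 * M * k) * (B + k / 3).
Proof.
move=> hM hM9 ha ha3 hb hb3 hab hA0 hB0 hk.
have Aa0 : 0 <= A + a * k by rewrite addr_ge0 ?mulr_ge0.
have Bb0 : 0 <= B + b * k by rewrite addr_ge0 ?mulr_ge0.
have third (d : R) : 0 <= d -> 3 * d <= 1 -> d * k <= k / 3.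
  by move=> d0 d3; have := ler_wpM2r hk d3; lra.
case: (lerP a (3 * M)) => ha3M.
  right; apply: ler_pM => //; first by have := ler_wpM2r hk ha3M; lra.
  by have := third b hb hb3; lra.
case: (lerP b (3 * M)) => hb3M.
  left; apply: ler_pM => //; first by have := third a ha ha3; lra.
  by have := ler_wpM2r hk hb3M; lra.
have hap : 0 < a by lra.
have haN : a * ((A + a * k) * (B + b * k)) <= a * (A * B + M * k ^+ 2) + k * (a * a * B + M * A).
  have -> : a * ((A + a * k) * (B + b * k)) = (A + a * k) * (a * B + (a * b) * k) by ring.
  have -> : a * (A * B + M * k ^+ 2) + k * (a * a * B + M * A) = (A + a * k) * (a * B + M * k).
    by ring.
  by rewrite ler_wpM2l // lerD2l ler_wpM2r.
have [hcc|hcc] := corner_convex hM hM9 hA0 hB0 (ltW ha3M) ha3; [right | left];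
  rewrite -(ler_pM2l hap); apply: (le_trans haN).
- have -> : a * ((A + 3 * M * k) * (B + k / 3))
            = a * (A * B + M * k ^+ 2) + k * (a * (3 * M * B + A / 3)) by field.
  by rewrite lerD2l ler_wpM2l.
- have -> : a * ((A + k / 3) * (B + 3 * M * k))
            = a * (A * B + M * k ^+ 2) + k * (a * (B / 3 + 3 * M * A)) by field.
  by rewrite lerD2l ler_wpM2l.
Qed.


Lemma corner_cubic_gt0 (M : R) : 0 < M -> 9 * M <= 1 ->
  0 < 5 - 51 * M + 153 * M ^+ 2 - 162 * M ^+ 3.
Proof.
move=> hM hM9.
have hM3 : M ^+ 3 <= M ^+ 2 / 9.
  have -> : M ^+ 3 = M * M ^+ 2 by rewrite exprS.
  have : 0 <= M ^+ 2 by apply: sqr_ge0.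
  nra.
have : 0 < 5 - 51 * M + 135 * M ^+ 2 by nra.
lra.
Qed.

Lemma corner_terms_eq0 (M q X Y : R) : 0 < M -> 9 * M <= 1 -> 0 < q ->
  0 <= X -> X <= 3 * M -> 0 <= Y -> Y <= 3 * M ->
  2 * M * (1 - 6 * M) * (X * (3 * M - Y)) = 0 -> M * (1 - 3 * M) * (Y * (3 * M - X)) = 0 ->
  M * (1 - 9 * M) * q * (X * Y) = 0 ->
  (X = 0 /\ Y = 0) \/ [/\ X = 3 * M, Y = 3 * M & 9 * M = 1].
Proof.
move=> hM hM9 hq hX hX3 hY hY3 hT3 hT4 hT5.
have nz1 : 2 * M * (1 - 6 * M) != 0 by apply/eqP; nra.
have nz2 : M * (1 - 3 * M) != 0 by apply/eqP; nra.
move: hT3 => /eqP; rewrite mulf_eq0 (negbTE nz1) /= mulf_eq0 => /orP[/eqP hX0|/eqP hY3'];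
  move: hT4 => /eqP; rewrite mulf_eq0 (negbTE nz2) /= mulf_eq0 => /orP[/eqP hY0|/eqP hX3'].
- by left.
- by exfalso; lra.
- by exfalso; lra.
right.
have eX : X = 3 * M by lra.
have eY : Y = 3 * M by lra.
split => //.
have hpos : 0 < M * q * (X * Y) by rewrite eX eY !mulr_gt0 //; lra.
have : (1 - 9 * M) * (M * q * (X * Y)) = 0 by rewrite -hT5; ring.
by move/eqP; rewrite mulf_eq0 (gt_eqF hpos) orbF => /eqP; lra.
Qed.

Lemma inner_corner_bound (M X Y : R) : 0 < M -> 9 * M <= 1 ->
  0 <= X -> X <= 3 * M -> 0 <= Y -> Y <= 3 * M ->
  let c := 2 - 9 * M in let k := 3 * M - curve M X Y in
  (X * (3 * M + c * Y) + k / 3) * (Y * (3 * M + c * X) + 3 * M * k)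
    <= M * (3 * M + c * X) * (3 * M + c * Y) /\
  ((X * (3 * M + c * Y) + k / 3) * (Y * (3 * M + c * X) + 3 * M * k)
     = M * (3 * M + c * X) * (3 * M + c * Y) ->
   (X = 0 /\ Y = 0) \/ [/\ X = 3 * M, Y = 3 * M & 9 * M = 1]).
Proof.
move=> hM hM9 hX hX3 hY hY3 c k.
have hk : k = 3 * M - 3 * M * (X + Y) - c * X * Y by rewrite /k /curve /c; ring.
have hc : c = 2 - 9 * M by [].
clearbody c k.
have hc0 : 0 <= c by lra.
pose q := 5 - 51 * M + 153 * M ^+ 2 - 162 * M ^+ 3.
have hq : 0 < q := corner_cubic_gt0 hM hM9.
pose T1 := 18 * M ^+ 3 * (X - Y) ^+ 2.
pose T2 := 3 * M ^+ 2 * (1 - 9 * M) * Y ^+ 2.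
pose T3 := 2 * M * (1 - 6 * M) * (X * (3 * M - Y)).
pose T4 := M * (1 - 3 * M) * (Y * (3 * M - X)).
pose T5 := M * (1 - 9 * M) * q * (X * Y).
pose T6 := M * c * (1 - 3 * M) * (X * Y * (3 * M - Y)).
pose T7 := 2 * M * c * (1 - 6 * M) * (X * Y * (3 * M - X)).
pose T8 := 2 / 3 * c ^+ 2 * (1 - 3 * M) * (X * Y * (9 * M ^+ 2 - X * Y)).
(* A sum-of-products certificate: every [Ti] is visibly nonnegative on [0, 3M]^2. *)
have sos : M * (3 * M + c * X) * (3 * M + c * Y)
           - (X * (3 * M + c * Y) + k / 3) * (Y * (3 * M + c * X) + 3 * M * k)
   = T1 + T2 + T3 + T4 + T5 + T6 + T7 + T8.
  by rewrite /T1 /T2 /T3 /T4 /T5 /T6 /T7 /T8 /q hk hc; field.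
have hXY0 : 0 <= X * Y by apply: mulr_ge0.
have hXY9 : X * Y <= 9 * M ^+ 2.
  by have := ler_pM hX hY hX3 hY3; rewrite -expr2 exprMn; lra.
have p1 : 0 <= T1.
  by rewrite /T1; apply: mulr_ge0; [apply: mulr_ge0; [lra|apply: exprn_ge0; lra] | apply: sqr_ge0].
have p2 : 0 <= T2.
  by rewrite /T2; apply: mulr_ge0; [apply: mulr_ge0; [apply: mulr_ge0; [lra|apply: sqr_ge0]|lra] | apply: sqr_ge0].
have p3 : 0 <= T3.
  by rewrite /T3; apply: mulr_ge0; [apply: mulr_ge0; lra | apply: mulr_ge0; lra].
have p4 : 0 <= T4.
  by rewrite /T4; apply: mulr_ge0; [apply: mulr_ge0; lra | apply: mulr_ge0; lra].
have p5 : 0 <= T5.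
  by rewrite /T5; apply: mulr_ge0 => //; apply: mulr_ge0; [apply: mulr_ge0; lra | lra].
have p6 : 0 <= T6.
  by rewrite /T6; apply: mulr_ge0; [apply: mulr_ge0; [apply: mulr_ge0|]; lra | apply: mulr_ge0 => //; lra].
have p7 : 0 <= T7.
  by rewrite /T7; apply: mulr_ge0; [apply: mulr_ge0; [apply: mulr_ge0; [apply: mulr_ge0|]|]; lra | apply: mulr_ge0 => //; lra].
have p8 : 0 <= T8.
  by rewrite /T8; apply: mulr_ge0; [apply: mulr_ge0; [apply: mulr_ge0; [lra|apply: sqr_ge0]|lra] | apply: mulr_ge0 => //; lra].
split; first by lra.
move=> hE; apply: (corner_terms_eq0 hM hM9 hq hX hX3 hY hY3); rewrite -?/T3 -?/T4 -?/T5; lra.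
Qed.

Lemma inner_mix_le (M a b X Y x1 y1 c k : R) : c = 2 - 9 * M -> k = 3 * M - curve M X Y ->
  0 < M -> 9 * M <= 1 -> 0 <= a -> a <= 1 -> 0 <= b -> b <= 1 ->
  0 <= X -> 0 <= Y -> 0 <= x1 -> 0 <= y1 ->
  curve M X y1 <= 3 * M -> curve M x1 Y <= 3 * M ->
  ((1 - a) * X + a * x1) * ((1 - b) * Y + b * y1) * ((3 * M + c * X) * (3 * M + c * Y))
    <= (X * (3 * M + c * Y) + a * k) * (Y * (3 * M + c * X) + b * k).
Proof.
move=> hc hk hM hM9 ha ha1 hb hb1 hX hY hx1 hy1; rewrite /curve -hc in hk *.
set z := _ * X + _; set w := _ * Y + _; set s := 3 * M + c * X; set t := 3 * M + c * Y.
move=> hXy1 hx1Y.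
have hz : 0 <= z by rewrite /z addr_ge0 // mulr_ge0 //; lra.
have hw : 0 <= w by rewrite /w addr_ge0 // mulr_ge0 //; lra.
have hzt : z * t <= X * t + a * k.
  have -> : z * t = (1 - a) * (X * t) + a * (x1 * t) by rewrite /z; ring.
  have : a * (x1 * t) <= a * (X * t + k) by rewrite ler_wpM2l // /t hk; lra.
  lra.
have hws : w * s <= Y * s + b * k.
  have -> : w * s = (1 - b) * (Y * s) + b * (y1 * s) by rewrite /w; ring.
  have : b * (y1 * s) <= b * (Y * s + k) by rewrite ler_wpM2l // /s hk; lra.
  lra.
have -> : (z * w) * (s * t) = (z * t) * (w * s) by ring.
have hs : 0 <= s by rewrite /s addr_ge0 ?mulr_ge0 //; lra.
have ht : 0 <= t by rewrite /t addr_ge0 ?mulr_ge0 //; lra.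
by apply: ler_pM => //; apply: mulr_ge0.
Qed.

Lemma product_mix_inner (M a b X Y x1 y1 : R) : 0 < M -> 9 * M <= 1 ->
  0 <= a -> 3 * a <= 1 -> 0 <= b -> 3 * b <= 1 -> a * b <= M ->
  0 <= X -> X <= 3 * M -> 0 <= Y -> Y <= 3 * M -> 0 <= x1 -> 0 <= y1 ->
  curve M X Y <= 3 * M -> curve M X y1 <= 3 * M -> curve M x1 Y <= 3 * M ->
  ((1 - a) * X + a * x1) * ((1 - b) * Y + b * y1) <= M /\
  (((1 - a) * X + a * x1) * ((1 - b) * Y + b * y1) = M -> below_or_origin X Y x1 y1).
Proof.
move=> hM hM9 ha ha3 hb hb3 hab hX hX3 hY hY3 hx1 hy1 hXY hXy1 hx1Y.
have hN := inner_mix_le (erefl _) (erefl _) hM hM9 ha (ltac:(lra) : a <= 1) hb (ltac:(lra) : b <= 1)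
  hX hY hx1 hy1 hXy1 hx1Y.
have [hG1 hG1e] := inner_corner_bound hM hM9 hX hX3 hY hY3.
have [hG2 hG2e] := inner_corner_bound hM hM9 hY hY3 hX hX3.
move: hXY hXy1 hx1Y hN hG1 hG1e hG2 hG2e; rewrite /= (curveC M Y X).
set c := 2 - 9 * M; set k := 3 * M - _.
have hk : k = 3 * M - curve M X Y by []; have hc : c = 2 - 9 * M by [].
rewrite /curve -hc in hk *; clearbody c k.
set z := _ * X + _; set w := _ * Y + _; set s := 3 * M + c * X; set t := 3 * M + c * Y.
move=> hXY hXy1 hx1Y hN hG1 hG1e hG2 hG2e.
have hk0 : 0 <= k by lra.
have hs : 0 < s by rewrite /s; nra.
have ht : 0 < t by rewrite /t; nra.
have hst : 0 < s * t by apply: mulr_gt0.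
have hcorner := corner_mix_le hM hM9 ha ha3 hb hb3 hab
  (mulr_ge0 hX (ltW ht)) (mulr_ge0 hY (ltW hs)) hk0.
have hN1 : (X * t + k / 3) * (Y * s + 3 * M * k) <= M * (s * t) by rewrite mulrA.
have hN2 : (X * t + 3 * M * k) * (Y * s + k / 3) <= M * (s * t).
  by rewrite mulrC [s * t]mulrC mulrA.
split.
  have : (z * w) * (s * t) <= M * (s * t) by case: hcorner; lra.
  by rewrite ler_pM2r.
move=> hE.
have corner_eq : (X = 0 /\ Y = 0) \/ [/\ X = 3 * M, Y = 3 * M & 9 * M = 1].
  case: hcorner => h; move: hN; rewrite hE => hN.
    by apply: hG1e; rewrite -[M * s * t]mulrA; lra.
  have [[Y0 X0]|[eY eX e9]] : (Y = 0 /\ X = 0) \/ [/\ Y = 3 * M, X = 3 * M & 9 * M = 1].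
    by apply: hG2e; rewrite [(Y * s + k / 3) * _]mulrC -[M * t * s]mulrA [t * s]mulrC; lra.
    by left.
  by right.
case: corner_eq => [X0|[eX eY e9]]; first by right.
left.
have k0 : k = 0 by rewrite hk eX eY hc; nra.
split.
- by rewrite -(ler_pM2r ht) /t; rewrite k0 in hk; nra.
- by rewrite -(ler_pM2r hs) /s; rewrite k0 in hk; nra.
Qed.

Lemma below_or_originC (X Y x1 y1 : R) : below_or_origin Y X y1 x1 -> below_or_origin X Y x1 y1.
Proof. by case=> -[? ?]; [left | right]. Qed.

Lemma product_mix_low (M a b X Y x1 y1 : R) : 0 < M -> 9 * M <= 1 ->
  0 <= a -> 3 * a <= 1 -> 0 <= b -> 3 * b <= 1 -> a * b <= M ->
  0 <= X -> X <= 3 * M -> 0 <= Y -> 0 <= x1 -> 0 <= y1 ->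
  curve M X Y <= 3 * M -> curve M X y1 <= 3 * M -> x1 * Y <= M -> curve M x1 Y <= 3 * M ->
  ((1 - a) * X + a * x1) * ((1 - b) * Y + b * y1) <= M /\
  (((1 - a) * X + a * x1) * ((1 - b) * Y + b * y1) = M -> below_or_origin X Y x1 y1).
Proof.
move=> M0 M9 a0 a3 b0 b3 abM X0 X3 Y0 x10 y10 XY Xy1 x1Y x1Y'.
case: (lerP Y (3 * M)) => [Y3|/ltW Y3].
  exact: product_mix_inner.
case: (lerP (3 * Y) 1) => [Y1|/ltW Y1].
  exact: product_mix_middle.
exact: product_mix_high.
Qed.

Lemma product_mix (M a b X Y x1 y1 : R) : 0 < M -> 9 * M <= 1 ->
  0 <= a -> 3 * a <= 1 -> 0 <= b -> 3 * b <= 1 -> a * b <= M ->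
  0 <= X -> 0 <= Y -> 0 <= x1 -> 0 <= y1 ->
  region M X Y -> region M X y1 -> region M x1 Y ->
  ((1 - a) * X + a * x1) * ((1 - b) * Y + b * y1) <= M /\
  (((1 - a) * X + a * x1) * ((1 - b) * Y + b * y1) = M -> below_or_origin X Y x1 y1).
Proof.
move=> M0 M9 a0 a3 b0 b3 abM X0 Y0 x10 y10 [XY XY'] [Xy1 Xy1'] [x1Y x1Y'].
case: (lerP X (3 * M)) => [X3|/ltW X3].
  exact: product_mix_low.
case: (lerP Y (3 * M)) => [Y3|/ltW Y3]; last exact: product_mix_outer.
have ba : b * a <= M by rewrite mulrC.
rewrite curveC in XY'; rewrite curveC in Xy1'; rewrite curveC in x1Y'.
have [le eq] := product_mix_low M0 M9 b0 b3 a0 a3 ba Y0 Y3 X0 y10 x10 XY' x1Y'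
  (ltac:(by rewrite mulrC) : y1 * X <= M) Xy1'.
by split=> [|E]; [rewrite mulrC | apply/below_or_originC/eq; rewrite mulrC].
Qed.

Lemma mix_eq_cases (M a b x0 x1 y0 y1 : R) : 0 < M -> 0 < a -> 0 < b ->
  3 * a <= 1 -> 3 * b <= 1 -> a * b <= M ->
  0 <= x0 -> 0 <= x1 -> x1 <= 1 -> 0 <= y0 -> 0 <= y1 -> y1 <= 1 -> x0 * y0 <= M ->
  below_or_origin x0 y0 x1 y1 -> ((1 - a) * x0 + a * x1) * ((1 - b) * y0 + b * y1) = M ->
  [/\ x0 = x1, y0 = y1 & x0 * y0 = M] \/ [/\ x0 = 0, y0 = 0, x1 = 1, y1 = 1 & a * b = M].
Proof.
move=> hM ha hb ha3 hb3 hab hx0 hx1 hx11 hy0 hy1 hy11 h00 [[hx hy]|[ex ey]] hE.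
- left.
  set z := _ * x0 + _ in hE; set w := _ * y0 + _ in hE.
  have hz : 0 <= z by rewrite /z addr_ge0 // mulr_ge0 //; lra.
  have hw : 0 <= w by rewrite /w addr_ge0 // mulr_ge0 //; lra.
  have hzx : z <= x0 by rewrite /z; nra.
  have hwy : w <= y0 by rewrite /w; nra.
  have hwp : 0 < w.
    by rewrite lt_neqAle hw andbT; apply/eqP => hw0; move: hE; rewrite -hw0 mulr0; lra.
  have hzp : 0 < z.
    by rewrite lt_neqAle hz andbT; apply/eqP => hz0; move: hE; rewrite -hz0 mul0r; lra.
  have hx0p : 0 < x0 by lra.
  have e1 : z = x0.
    have : (x0 - z) * w = 0 by apply/eqP; rewrite eq_le; apply/andP; split; nra.
    by move/eqP; rewrite mulf_eq0 (gt_eqF hwp) orbF subr_eq0 => /eqP.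
  have e2 : w = y0.
    have : x0 * (y0 - w) = 0 by apply/eqP; rewrite eq_le; apply/andP; split; nra.
    by move/eqP; rewrite mulf_eq0 (gt_eqF hx0p) /= subr_eq0 => /eqP.
  split; last by rewrite -e1 -e2.
  + have : a * (x0 - x1) = 0 by move: e1; rewrite /z; lra.
    by move/eqP; rewrite mulf_eq0 (gt_eqF ha) /= subr_eq0 => /eqP.
  + have : b * (y0 - y1) = 0 by move: e2; rewrite /w; lra.
    by move/eqP; rewrite mulf_eq0 (gt_eqF hb) /= subr_eq0 => /eqP.
- right; rewrite ex ey in hE *.
  have e : (a * b) * (x1 * y1) = M by rewrite -hE; ring.
  have hp : x1 * y1 <= 1 by rewrite mulr_ile1.
  have hab0 : 0 < a * b by apply: mulr_gt0.
  have eab : a * b = M.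
    have : (a * b) * (x1 * y1) <= a * b by apply: ler_piMr => //; apply: ltW.
    lra.
  have exy : x1 * y1 = 1 by apply: (mulfI (lt0r_neq0 hab0)); rewrite e eab mulr1.
  by split => //; nra.
Qed.

Lemma region_mix (M a b x0 x1 y0 y1 : R) : 0 < M -> 9 * M <= 1 ->
  0 <= a -> 3 * a <= 1 -> 0 <= b -> 3 * b <= 1 -> a * b <= M ->
  0 <= x0 -> x0 <= 1 -> 0 <= x1 -> x1 <= 1 -> 0 <= y0 -> y0 <= 1 -> 0 <= y1 -> y1 <= 1 ->
  region M x0 y0 -> region M x0 y1 -> region M x1 y0 ->
  region M ((1 - a) * x0 + a * x1) ((1 - b) * y0 + b * y1) /\
  (0 < a -> 0 < b -> ((1 - a) * x0 + a * x1) * ((1 - b) * y0 + b * y1) = M ->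
   [/\ x0 = x1, y0 = y1 & x0 * y0 = M] \/ [/\ x0 = 0, y0 = 0, x1 = 1, y1 = 1 & a * b = M]).
Proof.
move=> M0 M9 a0 a3 b0 b3 abM x00 x01 x10 x11 y00 y01 y10 y11 R00 R01 R10.
have [curve_le _] := curve_mix M0 M9 a0 a3 b0 b3 abM x00 y00 x10 y10 R00.2 R01.2 R10.2.
have [prod_le prod_eq] := product_mix M0 M9 a0 a3 b0 b3 abM x00 y00 x10 y10 R00 R01 R10.
split=> // ap bp E.
exact: mix_eq_cases ap bp a3 b3 abM x00 x10 x11 y00 y10 y11 R00.1 (prod_eq E) E.
Qed.

End PlanarStep.

Section ProductMeasure.
Variables (R : realFieldType) (n : nat).
Local Notation T := 'I_n.
Implicit Types (p : T -> R) (x z : {set T}) (U V : {set {set T}}).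

Definition weight p x : R := (\prod_(l in x) p l) * \prod_(k in ~: x) (1 - p k).

Lemma prod_measureE p U : prod_measure p U = \sum_(x in U) weight p x.
Proof. by []. Qed.

Definition zero_at p (l : T) : T -> R := fun j => if j == l then 0 else p j.

Lemma weight_notin p l x : l \notin x -> weight p x = (1 - p l) * weight (zero_at p l) x.
Proof.
move=> lNx; rewrite /weight.
have lCx : l \in ~: x by rewrite in_setC.
have -> : \prod_(j in x) zero_at p l j = \prod_(j in x) p j.
  by apply: eq_bigr => j jx; rewrite /zero_at; case: eqP jx => // ->; rewrite (negbTE lNx).
rewrite (bigD1 l lCx) /= [in RHS](bigD1 l lCx) /= {1}/zero_at eqxx subr0 mul1r.
rewrite [X in _ = _ * (_ * X)](eq_bigr (fun k => 1 - p k)) => [|k /andP [_ /negbTE kNl]].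
  by rewrite mulrCA.
by rewrite /zero_at kNl.
Qed.

Lemma weight_in p l x : l \in x -> weight p x = p l * weight (zero_at p l) (x :\ l).
Proof.
move=> lx; rewrite /weight.
have lCxl : l \in ~: (x :\ l) by rewrite in_setC in_setD1 eqxx.
have -> : \prod_(j in x :\ l) zero_at p l j = \prod_(j in x | j != l) p j.
  rewrite (eq_bigl (fun j => (j \in x) && (j != l))) => [|j]; last by rewrite in_setD1 andbC.
  by apply: eq_bigr => j /andP [_ /negbTE jNl]; rewrite /zero_at jNl.
rewrite (bigD1 l lx) /= [in RHS](bigD1 l lCxl) /= [zero_at p l l]/zero_at eqxx subr0 mul1r.
rewrite -mulrA; congr (_ * (_ * _)).
rewrite [RHS](eq_bigl (fun k => k \in ~: x)) => [|k]; last first.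
  change ((k \in ~: (x :\ l)) && (k != l) = (k \in ~: x)).
  by rewrite !inE; case: (eqVneq k l) => [->|]; rewrite ?lx ?andbT.
by apply: eq_bigr => k; rewrite in_setC /zero_at; case: eqP => // ->; rewrite lx.
Qed.

Lemma prod_measure_split_at p l U :
  prod_measure p U = (1 - p l) * prod_measure (zero_at p l) [set x in U | l \notin x]
                   + p l * prod_measure (zero_at p l) [set x :\ l | x in U & l \in x].
Proof.
rewrite !prod_measureE (bigID (fun x => l \in x)) /= addrC !big_distrr /=; congr (_ + _).
  rewrite [in RHS](eq_bigl (fun x => (x \in U) && (l \notin x))) => [|x]; last by rewrite inE.
  by apply: eq_bigr => x /andP [_ lNx]; rewrite (weight_notin p lNx).
rewrite big_imset /= => [|x y]; last first.
  by rewrite !inE => /andP [_ lx] /andP [_ ly] exy; rewrite -(setD1K lx) exy setD1K.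
rewrite [in RHS](eq_bigl (fun x => (x \in U) && (l \in x))) => [|x]; last by rewrite inE.
by apply: eq_bigr => x /andP [_ lx]; rewrite (weight_in p lx).
Qed.

Lemma weight_eq0 p x j : j \in x -> p j = 0 -> weight p x = 0.
Proof. by move=> jx pj0; rewrite /weight (bigD1 j jx) /= pj0 !mul0r. Qed.

Lemma weight_gt0 p x : {in x, forall j, 0 < p j} -> (forall j, p j < 1) -> 0 < weight p x.
Proof.
move=> p_gt0 p_lt1; apply: mulr_gt0; apply: prodr_gt0 => j jx; first exact: p_gt0.
by rewrite subr_gt0.
Qed.

Lemma sum_weight p : \sum_(x : {set T}) weight p x = 1.
Proof.
have := @bigA_distr R 0 1 *%R +%R T p (fun i => 1 - p i).
rewrite big1 => [->|i _]; last by rewrite /= subrKC.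
apply: eq_bigr => x _; rewrite /weight [in RHS](bigID (mem x)) /=; congr (_ * _).
  by apply: eq_bigr => i ->.
rewrite [in LHS](eq_bigl (fun i => i \notin x)) => [|i]; last by rewrite in_setC.
by apply: eq_bigr => i /negbTE ->.
Qed.

Lemma prod_measureC p U : prod_measure p U + prod_measure p (~: U) = 1.
Proof.
rewrite !prod_measureE -(sum_weight p) [in RHS](bigID (mem U)) /=.
by congr (_ + _); apply: eq_bigl => x; rewrite in_setC.
Qed.

Section UnitInterval.
Variable p : T -> R.
Hypothesis p01 : forall j, 0 <= p j <= 1.

Lemma weight_ge0 x : 0 <= weight p x.
Proof.
by apply: mulr_ge0; apply: prodr_ge0 => j _; have /andP[] := p01 j; rewrite ?subr_ge0.
Qed.

Lemma prod_measure_ge0 U : 0 <= prod_measure p U.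
Proof. by apply: sumr_ge0 => x _; apply: weight_ge0. Qed.

Lemma prod_measure_le1 U : prod_measure p U <= 1.
Proof. by rewrite -(prod_measureC p U) lerDl prod_measure_ge0. Qed.

Lemma prod_measure_eq0 U : prod_measure p U = 0 -> {in U, forall x, weight p x = 0}.
Proof.
rewrite prod_measureE => /eqP; rewrite psumr_eq0 => [/allP mU x xU|x _]; last exact: weight_ge0.
by apply/eqP; apply: (implyP (mU x (mem_index_enum x))).
Qed.

Lemma prod_measure_eq1 U : prod_measure p U = 1 -> forall x, x \notin U -> weight p x = 0.
Proof.
move=> mU1 x xNU; apply: (prod_measure_eq0 (U := ~: U)); last by rewrite in_setC.
by have := prod_measureC p U; rewrite mU1; lra.
Qed.

Lemma prod_measure_eq_sub U V :
  {in U, forall x, weight p x != 0 -> x \in V} -> prod_measure p U = prod_measure p V ->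
  {in V, forall x, weight p x != 0 -> x \in U}.
Proof.
move=> UV eqUV x xV; apply: contraTT => xNU.
have: prod_measure p (V :\: U) = 0.
  have: prod_measure p U = prod_measure p (U :&: V).
    rewrite !prod_measureE (big_setID V) /= [X in _ + X]big1 ?addr0 // => y.
    by rewrite inE => /andP [yNV yU]; apply: contraNeq yNV; apply: UV.
  by rewrite eqUV !prod_measureE (big_setID U) /= setIC; lra.
by move/prod_measure_eq0 => /(_ x); rewrite inE xNU xV => /(_ isT) ->; rewrite eqxx.
Qed.

End UnitInterval.

Lemma prod_measure_zero p U : (forall j, p j = 0) -> prod_measure p U = (set0 \in U)%:R.
Proof.
move=> p0; have weightE x : weight p x = (x == set0)%:R.
  have [->|[j jx]] := set_0Vmem x.
    by rewrite eqxx /weight big_set0 mul1r big1 // => k _; rewrite p0 subr0.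
  by rewrite (weight_eq0 jx (p0 j)); case: eqP jx => // ->; rewrite inE.
rewrite prod_measureE; case U0: (set0 \in U).
  rewrite (bigD1 set0 U0) /= weightE eqxx big1 ?addr0 // => x /andP [_ /negbTE].
  by rewrite weightE => ->.
by rewrite big1 // => x xU; rewrite weightE; case: eqP xU => // ->; rewrite U0.
Qed.

Lemma prod_measure_star p l : prod_measure p (star l) = p l.
Proof.
rewrite (prod_measure_split_at p l).
have -> : [set x in star l | l \notin x] = set0 by apply/setP => x; rewrite !inE andbN.
have -> : [set x :\ l | x in star l & l \in x] = ~: star l.
  apply/setP => z; rewrite !inE; apply/imsetP/idP => [[x _ ->]|lNz]; first by rewrite setD11.
  by exists (l |: z); rewrite ?setU1K // !inE eqxx.
have star0 : prod_measure (zero_at p l) (star l) = 0.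
  by apply: big1 => x; rewrite inE => lx; apply: (weight_eq0 lx); rewrite /zero_at eqxx.
have := prod_measureC (zero_at p l) (star l).
by rewrite star0 add0r => ->; rewrite /prod_measure big_set0 mulr0 add0r mulr1.
Qed.

End ProductMeasure.

Section Families.
Variable n : nat.
Local Notation T := 'I_n.
Implicit Types (l k : T) (S x y z : {set T}) (U V : {set {set T}}).

Definition agree_on S U V : Prop := forall z, z \subset S -> (z \in U) = (z \in V).

Lemma cross_intersecting_split U1 U2 l : cross_intersecting U1 U2 ->
  [/\ cross_intersecting [set x in U1 | l \notin x] [set x in U2 | l \notin x],
      cross_intersecting [set x in U1 | l \notin x] [set x :\ l | x in U2 & l \in x] &
      cross_intersecting [set x :\ l | x in U1 & l \in x] [set x in U2 | l \notin x]].
Proof.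
have setID1 x y : l \notin x -> x :&: (y :\ l) = x :&: y.
  by move=> lNx; apply/setP => j; rewrite !inE; case: eqP => // ->; rewrite (negbTE lNx).
move=> U12; split.
- by move=> x y; rewrite !inE => /andP [xU _] /andP [yU _]; apply: U12.
- move=> x y; rewrite [x \in _]inE => /andP [xU lNx] /imsetP [y' + ->].
  by rewrite inE => /andP [y'U _]; rewrite setID1 // U12.
- move=> x y /imsetP [x' + ->].
  by rewrite !inE => /andP [x'U _] /andP [yU lNy]; rewrite setIC setID1 // setIC U12.
Qed.

Lemma mem_imsetD1 U l z : l \in z -> (z :\ l \in [set x :\ l | x in U & l \in x]) = (z \in U).
Proof.
move=> lz; apply/imsetP/idP => [[x]|zU]; last by exists z; rewrite // inE zU lz.
by rewrite inE => /andP [xU lx] zx; rewrite -(setD1K lz) zx setD1K.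
Qed.

Lemma agree_on_split S l U V0 V1 :
  agree_on (S :\ l) [set x in U | l \notin x] V0 ->
  agree_on (S :\ l) [set x :\ l | x in U & l \in x] V1 ->
  agree_on S U [set z : {set T} | if l \in z then z :\ l \in V1 else z \in V0].
Proof.
move=> agree0 agree1 z zS; rewrite inE; case: ifP => lz.
  by rewrite -agree1 ?mem_imsetD1 // setSD.
by rewrite -agree0 ?inE ?lz ?andbT // subsetD1 zS lz.
Qed.

Lemma cross_intersectingC U V : cross_intersecting U V -> cross_intersecting V U.
Proof. by move=> UV x y xV yU; rewrite setIC UV. Qed.

Lemma cross_star_sub S U V k : cross_intersecting U V -> agree_on S V (star k) -> k \in S ->
  forall z, z \subset S -> z \in U -> k \in z.
Proof.
move=> UV agree kS z zS zU.
have kV : [set k] \in V by rewrite agree ?sub1set // inE set11.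
by have /set0Pn [j] := UV _ _ zU kV; rewrite !inE => /andP [jz /eqP <-].
Qed.

End Families.

Section Induction.
Variables (R : realFieldType) (n : nat).
Local Notation T := 'I_n.
Implicit Types (M : R) (p q : T -> R) (l k : T) (S x z : {set T}) (U V : {set {set T}}).

(* Coordinates outside [S] are removed by giving them probability 0, so that all weight lives
   on subsets of [S]. *)
Definition admissible M S p1 p2 : Prop :=
  (forall j, j \in S ->
     [/\ 0 < p1 j, 3 * p1 j <= 1, 0 < p2 j, 3 * p2 j <= 1 & p1 j * p2 j <= M]) /\
  (forall j, j \notin S -> p1 j = 0 /\ p2 j = 0).

Lemma admissibleC M S p1 p2 : admissible M S p1 p2 -> admissible M S p2 p1.
Proof.
move=> [inS notinS]; split=> j /[dup] jS; last by case/notinS.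
by case/inS => *; split; rewrite // mulrC.
Qed.

Lemma admissible_zero_at M S p1 p2 l :
  admissible M S p1 p2 -> admissible M (S :\ l) (zero_at p1 l) (zero_at p2 l).
Proof.
move=> [inS notinS]; split=> j; rewrite in_setD1 /zero_at.
  by case/andP => /negbTE -> /inS.
by case: eqP => [//|_ /notinS].
Qed.

Lemma admissible_01 M S p1 p2 : admissible M S p1 p2 -> forall j, 0 <= p1 j <= 1.
Proof.
move=> [inS notinS] j; case: (boolP (j \in S)) => [/inS [] *|/notinS [-> _]].
  by apply/andP; split; lra.
by rewrite lexx ler01.
Qed.

Lemma admissible_weight_neq0 M S p1 p2 x :
  admissible M S p1 p2 -> (weight p1 x != 0) = (x \subset S).
Proof.
move=> [inS notinS]; apply/idP/idP => [wx|/subsetP xS].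
  apply/subsetP => j jx; apply/negPn/negP => /notinS [pj0 _].
  by move: wx; rewrite (weight_eq0 jx pj0) eqxx.
rewrite gt_eqF // weight_gt0 => [//|j /xS /inS []//|j].
by case: (boolP (j \in S)) => [/inS [] *|/notinS [-> _]]; [lra | apply: ltr01].
Qed.

Section Support.
Variables (p : T -> R) (S : {set T}).
Hypothesis p01 : forall j, 0 <= p j <= 1.
Hypothesis weight_neq0 : forall x, (weight p x != 0) = (x \subset S).

Lemma agree_on_measure0 U : prod_measure p U = 0 -> agree_on S U set0.
Proof.
move=> U0 z zS; rewrite inE; apply: contraTF zS => zU.
by rewrite -weight_neq0 (prod_measure_eq0 p01 U0 zU) eqxx.
Qed.

Lemma agree_on_measure1 U : prod_measure p U = 1 -> agree_on S U setT.
Proof.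
move=> U1 z zS; rewrite inE; apply: contraTT zS => zNU.
by rewrite -weight_neq0 (prod_measure_eq1 p01 U1 zNU) eqxx.
Qed.

Lemma agree_on_eq_measure U U' V : agree_on S U V ->
  (forall z, z \subset S -> z \in U' -> z \in V) ->
  prod_measure p U' = prod_measure p U -> agree_on S U' V.
Proof.
move=> agree U'V eqU z zS; apply/idP/idP => [|zV]; first exact: U'V.
have sub : {in U', forall x, weight p x != 0 -> x \in U}.
  by move=> x xU'; rewrite weight_neq0 => xS; rewrite agree // U'V.
by apply: (prod_measure_eq_sub p01 sub eqU); rewrite ?agree ?weight_neq0.
Qed.

End Support.

Definition claim M S p1 p2 U1 U2 : Prop :=
  region M (prod_measure p1 U1) (prod_measure p2 U2) /\
  (prod_measure p1 U1 * prod_measure p2 U2 = M ->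
   exists2 k, k \in S & [/\ p1 k * p2 k = M, agree_on S U1 (star k) & agree_on S U2 (star k)]).

Lemma claim0 M p1 p2 U1 U2 : 0 < M -> 9 * M <= 1 ->
  admissible M set0 p1 p2 -> cross_intersecting U1 U2 -> claim M set0 p1 p2 U1 U2.
Proof.
move=> M0 M9 [_ notin0] U12.
have [p10 p20] : (forall j, p1 j = 0) /\ (forall j, p2 j = 0).
  by split=> j; have [] := notin0 j (negbT (in_set0 j)).
rewrite /claim /region /curve !prod_measure_zero //.
have : ~~ ((set0 \in U1) && (set0 \in U2)).
  by apply/negP => /andP [U10 U20]; have := U12 _ _ U10 U20; rewrite setI0 eqxx.
by case: (set0 \in U1); case: (set0 \in U2) => //= _; split; lra.
Qed.

Lemma claim_split M S p1 p2 U1 U2 l : 0 < M -> 9 * M <= 1 ->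
  admissible M S p1 p2 -> l \in S -> cross_intersecting U1 U2 ->
  (forall V1 V2, cross_intersecting V1 V2 ->
     claim M (S :\ l) (zero_at p1 l) (zero_at p2 l) V1 V2) ->
  claim M S p1 p2 U1 U2.
Proof.
move=> M0 M9 adm lS U12 IH.
have adm' := admissible_zero_at l adm; have adm'C := admissibleC adm'.
have [p10 p13 p20 p23 pM] := adm.1 l lS.
have [ci00 ci01 ci10] := cross_intersecting_split l U12.
have [R00 E00] := IH _ _ ci00; have [R01 _] := IH _ _ ci01; have [R10 _] := IH _ _ ci10.
move: R00 E00 R01 R10; rewrite /claim (prod_measure_split_at p1 l) (prod_measure_split_at p2 l).
set q1 := zero_at p1 l; set q2 := zero_at p2 l.
set A0 := [set x in U1 | _]; set A1 := [set x :\ l | x in U1 & _].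
set B0 := [set x in U2 | _]; set B1 := [set x :\ l | x in U2 & _] => R00 E00 R01 R10.
have q1_01 := admissible_01 adm'; have q2_01 := admissible_01 adm'C.
have [reg eq] := region_mix M0 M9 (ltW p10) p13 (ltW p20) p23 pM
  (prod_measure_ge0 q1_01 A0) (prod_measure_le1 q1_01 A0)
  (prod_measure_ge0 q1_01 A1) (prod_measure_le1 q1_01 A1)
  (prod_measure_ge0 q2_01 B0) (prod_measure_le1 q2_01 B0)
  (prod_measure_ge0 q2_01 B1) (prod_measure_le1 q2_01 B1) R00 R01 R10.
have agree_U1 := agree_on_split (U := U1); have agree_U2 := agree_on_split (U := U2).
split=> // /(eq p10 p20) [[eA eB /E00 [k kS' [pk agA0 agB0]]]|[A0_0 B0_0 A1_1 B1_1 pl]].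
  have [kl kS] : k != l /\ k \in S by apply/andP; rewrite -in_setD1.
  have agA1 : agree_on (S :\ l) A1 (star k).
    apply: (agree_on_eq_measure q1_01 _ agA0) => [x||//]; first exact: admissible_weight_neq0 adm'.
    by move=> z zS zA1; rewrite inE (cross_star_sub ci10 agB0 kS' zS zA1).
  have agB1 : agree_on (S :\ l) B1 (star k).
    apply: (agree_on_eq_measure q2_01 _ agB0) => [x||//]; first exact: admissible_weight_neq0 adm'C.
    by move=> z zS zB1; rewrite inE (cross_star_sub (cross_intersectingC ci01) agA0 kS' zS zB1).
  have star_merge :
      [set z : {set T} | if l \in z then z :\ l \in star k else z \in star k] = star k.
    by apply/setP => z; rewrite !inE kl; case: ifP.
  exists k => //; split; first by rewrite /q1 /q2 /zero_at (negbTE kl) in pk.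
    by rewrite -star_merge; apply: agree_U1.
  by rewrite -star_merge; apply: agree_U2.
have star_merge : [set z : {set T} | if l \in z then z :\ l \in setT else z \in set0] = star l.
  by apply/setP => z; rewrite !inE; case: ifP.
exists l => //; split => //; rewrite -star_merge.
  by apply: agree_U1; [apply: (agree_on_measure0 q1_01) | apply: (agree_on_measure1 q1_01)];
    rewrite // => x; exact: admissible_weight_neq0 adm'.
by apply: agree_U2; [apply: (agree_on_measure0 q2_01) | apply: (agree_on_measure1 q2_01)];
  rewrite // => x; exact: admissible_weight_neq0 adm'C.
Qed.

Lemma claim_holds M S p1 p2 U1 U2 : 0 < M -> 9 * M <= 1 ->
  admissible M S p1 p2 -> cross_intersecting U1 U2 -> claim M S p1 p2 U1 U2.
Proof.
move=> M0 M9; move: {2}#|S| (erefl #|S|) => m.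
elim: m S p1 p2 U1 U2 => [|m IH] S p1 p2 U1 U2 cardS adm U12.
  by move/eqP: cardS; rewrite cards_eq0 => /eqP S0; move: adm; rewrite S0 => adm; apply: claim0.
have [l lS] : exists l, l \in S by apply/set0Pn; rewrite -card_gt0 cardS.
apply: (claim_split M0 M9 adm lS U12) => V1 V2 V12.
apply: IH (admissible_zero_at l adm) V12.
by move: cardS; rewrite (cardsD1 l S) lS add1n => -[].
Qed.

End Induction.

Theorem theorem3 (R : realFieldType) (n : nat) (p1 p2 : 'I_n.+1 -> R)
  (hp1 : prob_vector p1) (hp2 : prob_vector p2)
  (hmax : forall l, p1 l * p2 l <= p1 ord0 * p2 ord0)
  (h13 : forall l, p1 l <= 3^-1 /\ p2 l <= 3^-1)
  (U1 U2 : {set {set 'I_n.+1}}) (hU : cross_intersecting U1 U2) :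
  prod_measure p1 U1 * prod_measure p2 U2 <= p1 ord0 * p2 ord0 /\
  (prod_measure p1 U1 * prod_measure p2 U2 = p1 ord0 * p2 ord0 <->
   exists l, p1 l * p2 l = p1 ord0 * p2 ord0 /\ U1 = star l /\ U2 = star l).
Proof.
set M := p1 ord0 * p2 ord0.
have third l : 3 * p1 l <= 1 /\ 3 * p2 l <= 1 by case: (h13 l); split; lra.
have M0 : 0 < M by rewrite mulr_gt0 //; [case: (hp1 ord0) | case: (hp2 ord0)].
have M9 : 9 * M <= 1.
  have [[p10 _] [p20 _]] := (hp1 ord0, hp2 ord0).
  have [p13 p23] := third ord0.
  have := ler_pM (ltac:(lra) : 0 <= 3 * p1 ord0) (ltac:(lra) : 0 <= 3 * p2 ord0) p13 p23.
  by rewrite mulr1 /M; lra.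
have adm : admissible M [set: 'I_n.+1] p1 p2.
  split=> j; rewrite ?inE // => _.
  by have [[? _] [? _]] := (hp1 j, hp2 j); have [? ?] := third j; split.
have [[prod_le _] prod_eq] := claim_holds M0 M9 adm hU.
have agree_star U l : agree_on [set: 'I_n.+1] U (star l) -> U = star l.
  by move=> agree; apply/setP => z; rewrite agree ?subsetT.
split=> //; split=> [/prod_eq [l _ [pl /agree_star -> /agree_star ->]]|[l [pl [-> ->]]]].
  by exists l.
by rewrite !prod_measure_star.
Qed.
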